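(* $P_{x,1}(H)=ky+k(x-1)$, and $P_{x^m,1}(H)=k(x^m-1)$ for every integer $m\neq1$.
   Context: Let $k$ be a field and $0\neq q\in k$ not a root of unity. $H=k_q[x,x^{-1},y]$ is the $k$-algebra generated by $x,x^{-1},y$ with $xx^{-1}=x^{-1}x=1$, $yx=qxy$, a Hopf algebra with $\Delta(x)=x\otimes x$, $\Delta(x^{-1})=x^{-1}\otimes x^{-1}$, $\Delta(y)=y\otimes x+1\otimes y$, $\varepsilon(x)=1$, $\varepsilon(y)=0$; $\{x^ny^m:n\in\mathbb{Z},m\in\mathbb{N}\}$ is a $k$-basis. For group-like elements $g,h$ of a coalgebra $C$, $P_{g,h}(C)=\{c\in C:\Delta(c)=c\otimes g+h\otimes c\}$. *)

(* The Hopf algebra H = k_q[x,x^{-1},y] is modelled by its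
   k-basis {x^n y^m : n in Z, m in N}: an element is a finite formal sum
   (list of (coefficient, (n, m)) terms); two lists denote the same element iff
   all their coefficients agree.  H (x) H has basis the pairs of basis
   elements.  Multiplication uses y^m x^n = q^(m n) x^n y^m (from yx = qxy),
   and Delta is the algebra map determined by
   Delta(x) = x(x)x, Delta(x^-1) = x^-1(x)x^-1, Delta(y) = y(x)x + 1(x)y,
   i.e. Delta(x^n y^m) = Delta(x)^n Delta(y)^m, extended linearly. *)
From HB Require Import structures.
From mathcomp Require Import all_boot all_order all_algebra.
Set Implicit Arguments. Unset Strict Implicit. Unset Printing Implicit Defensive.
Import Order.TTheory GRing.Theory Num.Theory.
Local Open Scope ring_scope.

Section QPlane.
Variable k : fieldType.

Definition Hel := seq (k * (int * nat)).
Definition HHel := seq (k * ((int * nat) * (int * nat))).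

Definition coefH (u : Hel) (p : int * nat) : k :=
  \sum_(t <- u | t.2 == p) t.1.
Definition coefHH (U : HHel) (pp : (int * nat) * (int * nat)) : k :=
  \sum_(t <- U | t.2 == pp) t.1.

Definition eqH (u v : Hel) : Prop := forall p, coefH u p = coefH v p.

Definition Hscale (a : k) (u : Hel) : Hel := [seq (a * t.1, t.2) | t <- u].
Definition Hadd (u v : Hel) : Hel := u ++ v.
Definition Hsub (u v : Hel) : Hel := u ++ Hscale (-1) v.

Definition Hbasis (n : int) (m : nat) : Hel := [:: (1, (n, m))].
Definition H1 : Hel := Hbasis 0 0.
Definition Hx : Hel := Hbasis 1 0.
Definition Hy : Hel := Hbasis 0 1.
Definition Hxz (m : int) : Hel := Hbasis m 0.

Variable q : k.

Definition bmul (p r : int * nat) : k * (int * nat) :=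
  (q ^ (p.2%:Z * r.1), (p.1 + r.1, (p.2 + r.2)%N)).

Definition HHmul (U V : HHel) : HHel :=
  [seq (t.1 * s.1 * (bmul t.2.1 s.2.1).1 * (bmul t.2.2 s.2.2).1,
        ((bmul t.2.1 s.2.1).2, (bmul t.2.2 s.2.2).2)) | t <- U, s <- V].

Definition HH1 : HHel := [:: (1, ((0, 0%N), (0, 0%N)))].
Definition Dx : HHel := [:: (1, ((1, 0%N), (1, 0%N)))].
Definition Dxinv : HHel := [:: (1, ((-1, 0%N), (-1, 0%N)))].
Definition Dy : HHel := [:: (1, ((0, 1%N), (1, 0%N))); (1, ((0, 0%N), (0, 1%N)))].

Definition HHpow (X : HHel) (n : nat) : HHel := iter n (HHmul X) HH1.
Definition Dxz (n : int) : HHel :=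
  match n with Posz n => HHpow Dx n | Negz n => HHpow Dxinv n.+1 end.

Definition Delta (u : Hel) : HHel :=
  flatten [seq [seq (t.1 * s.1, s.2) | s <- HHmul (Dxz t.2.1) (HHpow Dy t.2.2)]
          | t <- u].

Definition Htensor (u v : Hel) : HHel :=
  [seq (t.1 * s.1, (t.2, s.2)) | t <- u, s <- v].

(* c \in P_{g,h}(H) :  Delta(c) = c (x) g + h (x) c *)
Definition skew_prim (g h c : Hel) : Prop :=
  forall pp, coefHH (Delta c) pp = coefHH (Htensor c g ++ Htensor h c) pp.

End QPlane.

(* Since (1 ⊗ y)(y ⊗ x) = q (y ⊗ x)(1 ⊗ y), the q-binomial theorem gives
   Δ(x^n y^m) = Σ_j [m, j]_q x^n y^j ⊗ x^(n+j) y^(m-j).  Compare the coefficients of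
   Δ(c) and of c ⊗ x^M + 1 ⊗ c at a few basis tensors.  At x^n y ⊗ x^(n+1) y^(m-1) only
   the term x^n y^m of c contributes, with weight [m, 1]_q = (1 - q^m)/(1 - q) ≠ 0 since q
   is not a root of unity, so c has y-degree at most 1.  At x^n ⊗ x^n y and y ⊗ x the
   y-part of c is forced to be a multiple of y, which survives only when M = 1; at
   x^n ⊗ x^n and 1 ⊗ x^M the rest is forced to be a multiple of x^M - 1.  Conversely y
   and x^M - 1 are skew-primitive, and P_{x^M,1} is a subspace. *)

From HB Require Import structures.
From mathcomp Require Import all_boot all_order all_algebra.
From mathcomp Require Import zify ring.
Set Implicit Arguments.
Unset Strict Implicit.
Unset Printing Implicit Defensive.
Import Order.TTheory GRing.Theory Num.Theory.
Local Open Scope ring_scope.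

Section QPlane.
Variables (k : fieldType) (q : k).
Notation idx := (int * nat)%type.
Notation idx2 := (idx * idx)%type.

Lemma coefHH_cat (U V : HHel k) pp : coefHH (U ++ V) pp = coefHH U pp + coefHH V pp.
Proof. by rewrite /coefHH big_cat. Qed.

Lemma HHmul_cons t (U V : HHel k) : HHmul q (t :: U) V = HHmul q [:: t] V ++ HHmul q U V.
Proof. by rewrite /HHmul /= cats0. Qed.

Lemma coefHH_mul_basis (r pp : idx2) (V : HHel k) :
  coefHH (HHmul q [:: (1, r)] V) pp =
  if (r.1.2 <= pp.1.2)%N && (r.2.2 <= pp.2.2)%N then
    q ^ (r.1.2%:Z * (pp.1.1 - r.1.1)) * q ^ (r.2.2%:Z * (pp.2.1 - r.2.1)) *
    coefHH V ((pp.1.1 - r.1.1, (pp.1.2 - r.1.2)%N), (pp.2.1 - r.2.1, (pp.2.2 - r.2.2)%N))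
  else 0.
Proof.
move: r pp => [[n1 m1] [n2 m2]] [[a1 j1] [a2 j2]] /=.
rewrite /HHmul /= cats0 /coefHH big_map /bmul /= mulr_sumr.
case: ifP => [/andP[le1 le2] | out]; last first.
  rewrite big_pred0 // => -[c [[b1 l1] [b2 l2]]] /=; rewrite !xpair_eqE.
  apply/negP => /andP[/andP[_ /eqP e1] /andP[_ /eqP e2]].
  by move: out; rewrite -e1 -e2 !leq_addr.
apply: eq_big => [[c [[b1 l1] [b2 l2]]] | [c [[b1 l1] [b2 l2]]]] /=; rewrite !xpair_eqE.
  by apply/idP/idP => /and3P[/andP[/eqP ? /eqP ?] /eqP ? /eqP ?];
     rewrite !andbA; do !(apply/andP; split); apply/eqP; lia.
move=> /and3P[/andP[/eqP e1 _] /eqP e3 _].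
rewrite -e1 -e3 ![_ + _ - _]addrC !addKr mul1r; ring.
Qed.

Fixpoint qbinom (m j : nat) : k :=
  match m with
  | 0 => (j == 0)%:R
  | m'.+1 => (if j is j'.+1 then qbinom m' j' else 0) + q ^+ j * qbinom m' j
  end.

Lemma qbinom_small m j : (m < j)%N -> qbinom m j = 0.
Proof. by elim: m j => [|m IH] [|j] //= lt_mj; rewrite !IH ?mulr0 ?addr0 //; lia. Qed.

Lemma qbinomn0 m : qbinom m 0 = 1.
Proof. by elim: m => //= m ->; rewrite mulr1 add0r. Qed.

Lemma qbinomnn m : qbinom m m = 1.
Proof. by elim: m => //= m ->; rewrite qbinom_small ?mulr0 ?addr0. Qed.

Lemma qbinomn1 m : (1 - q) * qbinom m 1 = 1 - q ^+ m.
Proof.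
elim: m => [|m IH] /=; first by rewrite mulr0 expr0 subrr.
by rewrite qbinomn0 expr1 mulrDr mulrCA IH exprS; ring.
Qed.

Lemma coefHH_Dy_pow m a j a2 l :
  coefHH (HHpow q (Dy k) m) ((a, j), (a2, l)) =
  ((a == 0) && (a2 == j%:Z) && (m == j + l)%N)%:R * qbinom m j.
Proof.
elim: m a j a2 l => [|m IH] a j a2 l.
  rewrite /coefHH big_cons big_nil /= addr0 !xpair_eqE.
  case: j l => [|j] [|l]; rewrite /= ?andbF ?mulr0 ?mul0r //.
  by rewrite mulr1 !andbT (eq_sym a) (eq_sym a2); case: (_ && _).
rewrite /= -/(HHpow q (Dy k) m) HHmul_cons coefHH_cat !coefHH_mul_basis /= !IH.
rewrite !subr0 !subn0 !mul0r !mul1r !expr0z ?mul1r subr_eq -PoszD addn1.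
case: (eqVneq a 0) => [->|_]; last by rewrite /= !mul0r !mulr0 !if_same addr0.
rewrite expr0z mul1r /=.
case: j l => [|j] [|l]; rewrite /= ?andbF ?mul0r ?mulr0 ?addr0 ?add0r ?addn0 ?addnS ?subn1 //=.
- rewrite add0n eqSS; case: (eqVneq a2 (Posz 0%N)) => [->|_].
    by rewrite expr0z expr0 !mul1r.
  by rewrite /= !mul0r mulr0.
- rewrite eqSS mul1r; case: (eqVneq m j) => [->|_]; last by rewrite andbF !mul0r.
  by rewrite (@qbinom_small j j.+1) // mulr0 addr0.
- rewrite mul1r eqSS addSn; case: (eqVneq a2 j.+1) => [->|_]; last by rewrite /= !mul0r mulr0 addr0.
  by rewrite mulrDr mulrCA.
Qed.

Lemma HHpow_grouplike (n : int) i :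
  HHpow q [:: (1, ((n, 0%N), (n, 0%N)))] i = [:: (1, ((n * i%:Z, 0%N), (n * i%:Z, 0%N)))].
Proof.
elim: i => [|i IH]; first by rewrite mulr0.
rewrite [LHS]/= -/(HHpow q _ i) IH /HHmul /= !mul0r expr0z !mulr1.
by rewrite intS mulrDr mulr1.
Qed.

Lemma Dxz_basis n : Dxz q n = [:: (1, ((n, 0%N), (n, 0%N)))].
Proof.
case: n => i; rewrite /Dxz.
  by rewrite -[Dx k]/[:: (1, ((1, 0%N), (1, 0%N)))] HHpow_grouplike mul1r.
by rewrite -[Dxinv k]/[:: (1, ((-1, 0%N), (-1, 0%N)))] HHpow_grouplike mulN1r NegzE.
Qed.

Lemma coefHH_Delta_basis n m a j a2 l :
  coefHH (Delta q (Hbasis k n m)) ((a, j), (a2, l)) =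
  ((a == n) && (a2 == n + j%:Z) && (m == j + l)%N)%:R * qbinom m j.
Proof.
have -> : coefHH (Delta q (Hbasis k n m)) ((a, j), (a2, l)) =
           coefHH (HHmul q (Dxz q n) (HHpow q (Dy k) m)) ((a, j), (a2, l)).
  by rewrite /Delta /coefHH /= cats0 big_map; apply: eq_bigr => s _; rewrite mul1r.
rewrite Dxz_basis coefHH_mul_basis /= !mul0r !expr0z !mul1r !subn0.
by rewrite coefHH_Dy_pow subr_eq0 subr_eq addrC.
Qed.

Lemma coefHH_Delta (c : Hel k) pp :
  coefHH (Delta q c) pp = \sum_(t <- c) t.1 * coefHH (Delta q (Hbasis k t.2.1 t.2.2)) pp.
Proof.
rewrite /Delta /coefHH big_flatten big_map; apply: eq_bigr => t _.
by rewrite /= cats0 !big_map mulr_sumr; apply: eq_bigr => s _; rewrite mul1r.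
Qed.

Lemma coefHH_Htensor_basisr (c : Hel k) n m pp :
  coefHH (Htensor c (Hbasis k n m)) pp = \sum_(t <- c) t.1 * ((t.2, (n, m)) == pp)%:R.
Proof.
rewrite /Htensor /coefHH big_flatten big_map; apply: eq_bigr => t _.
by rewrite big_cons big_nil /= addr0 mulr1; case: eqP; rewrite ?mulr1 ?mulr0.
Qed.

Lemma coefHH_Htensor_basisl (c : Hel k) n m pp :
  coefHH (Htensor (Hbasis k n m) c) pp = \sum_(t <- c) t.1 * ((((n, m), t.2)) == pp)%:R.
Proof.
rewrite /Htensor /coefHH /= cats0 big_map big_mkcond; apply: eq_bigr => t _.
by rewrite /= mul1r; case: eqP; rewrite ?mulr1 ?mulr0.
Qed.

Definition prim_defect (M : int) (p : idx) (pp : idx2) : k :=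
  coefHH (Delta q (Hbasis k p.1 p.2)) pp -
  (((p, (M, 0%N)) == pp)%:R + (((0, 0%N), p) == pp)%:R).

Lemma skew_primE M (c : Hel k) :
  skew_prim q (Hxz k M) (H1 k) c <->
  forall pp, \sum_(t <- c) t.1 * prim_defect M t.2 pp = 0.
Proof.
have defectE pp : \sum_(t <- c) t.1 * prim_defect M t.2 pp =
    coefHH (Delta q c) pp - coefHH (Htensor c (Hxz k M) ++ Htensor (H1 k) c) pp.
  rewrite coefHH_cat coefHH_Delta coefHH_Htensor_basisr coefHH_Htensor_basisl.
  by rewrite -big_split -sumrB; apply: eq_bigr => t _; rewrite mulrBr mulrDr.
split=> prim_c pp; first by rewrite defectE prim_c subrr.
by apply/eqP; rewrite -subr_eq0 -defectE prim_c.
Qed.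

Lemma big_coefH (c : Hel k) (F : idx -> k) (S : seq idx) :
  uniq S -> (forall t, t \in c -> t.2 \notin S -> F t.2 = 0) ->
  \sum_(t <- c) t.1 * F t.2 = \sum_(p <- S) coefH c p * F p.
Proof.
move=> uniqS outS; rewrite /coefH.
under [RHS]eq_bigr do rewrite mulr_suml big_mkcond.
rewrite exchange_big /=; apply: eq_big_seq => t tc.
rewrite -big_mkcond /= -big_filter (eq_filter (a2 := pred1 t.2)); last first.
  by move=> p; rewrite /= eq_sym.
have [tS | tNS] := boolP (t.2 \in S).
  by rewrite filter_pred1_uniq // big_cons big_nil addr0.
rewrite outS // mulr0 big_filter big1_seq // => p /andP[/eqP-> pS].
by rewrite pS in tNS.
Qed.

Lemma eqH_big (c c' : Hel k) (F : idx -> k) : eqH c c' ->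
  \sum_(t <- c) t.1 * F t.2 = \sum_(t <- c') t.1 * F t.2.
Proof.
move=> eq_cc'; set S := undup [seq t.2 | t <- c ++ c'].
have inS t : t \in c ++ c' -> t.2 \in S by move=> tc; rewrite mem_undup map_f.
rewrite !(@big_coefH _ _ S) ?undup_uniq //.
- by apply: eq_bigr => p _; rewrite eq_cc'.
- by move=> t tc' /negP tNS; case: tNS; apply: inS; rewrite mem_cat tc' orbT.
- by move=> t tc /negP tNS; case: tNS; apply: inS; rewrite mem_cat tc.
Qed.

Lemma big_coefH1 (c : Hel k) (F : idx -> k) p0 a :
  (forall p, F p = (p == p0)%:R * a) -> \sum_(t <- c) t.1 * F t.2 = coefH c p0 * a.
Proof.
move=> Fp; rewrite (@big_coefH _ _ [:: p0]) // ?big_seq1 ?Fp ?eqxx ?mul1r //.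
by move=> t _; rewrite inE Fp => /negbTE->; rewrite mul0r.
Qed.

Lemma big_coefH2 (c : Hel k) (F : idx -> k) p0 p1 a0 a1 : p0 != p1 ->
  (forall p, F p = (p == p0)%:R * a0 + (p == p1)%:R * a1) ->
  \sum_(t <- c) t.1 * F t.2 = coefH c p0 * a0 + coefH c p1 * a1.
Proof.
move=> p01 Fp; rewrite (@big_coefH _ _ [:: p0; p1]) /= ?inE ?p01 //.
  by rewrite big_cons big_seq1 !Fp !eqxx (eq_sym p1 p0) (negbTE p01) /=; ring.
by move=> t _; rewrite !inE negb_or Fp => /andP[/negbTE-> /negbTE->]; rewrite !mul0r addr0.
Qed.

Arguments qbinom : simpl never.

Local Ltac simpl_indicators :=
  rewrite ?add0n ?addn0 ?addr0 ?eqxx ?andbF ?andbT ?andFb ?andTb /= ?qbinomn0 ?qbinomnn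
          ?mul0r ?mul1r ?addr0 ?add0r ?subrr ?subr0 ?oppr0.

(* [prim_defect_at_uv] evaluates the defect at a basis tensor with left leg u and right
   leg v, where x stands for a power of x, y for a monomial of positive y-degree, and 1 for 1. *)
Lemma prim_defect_at_yy M n m p :
  prim_defect M p ((n, 1%N), (n + 1, m.+1)) = (p == (n, m.+2))%:R * qbinom m.+2 1.
Proof.
case: p => n' m'; rewrite /prim_defect coefHH_Delta_basis !xpair_eqE /= ?andbF ?andbT.
case: (eqVneq n' n) => [->|/negbTE ne]; rewrite ?eqxx /=; last first.
  by rewrite ?ne ?(eq_sym n n') ?ne /= !mul0r addr0 subrr.
by case: eqP => [->|_]; rewrite /= ?mul1r ?mul0r addr0 subr0.
Qed.

Lemma prim_defect_at_yx M n p :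
  prim_defect M p ((n, 1%N), (n + 1, 0%N)) = (p == (n, 1%N))%:R * (1 - (n + 1 == M)%:R).
Proof.
case: p => n' m'; rewrite /prim_defect coefHH_Delta_basis !xpair_eqE /= ?andbF ?andbT.
case: (eqVneq n' n) => [->|/negbTE ne]; rewrite ?eqxx /=; last first.
  by rewrite ?ne ?(eq_sym n n') ?ne; simpl_indicators.
case: m' => [|[|m']]; simpl_indicators => //.
by rewrite eq_sym.
Qed.

Lemma prim_defect_at_xy M n p :
  prim_defect M p ((n, 0%N), (n, 1%N)) = (p == (n, 1%N))%:R * (1 - (n == 0)%:R).
Proof.
case: p => n' m'; rewrite /prim_defect coefHH_Delta_basis !xpair_eqE /= ?andbF ?andbT.
case: (eqVneq n' n) => [->|/negbTE ne]; rewrite ?eqxx /=; last first.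
  by rewrite ?ne ?(eq_sym n n') ?ne; simpl_indicators.
case: m' => [|[|m']]; simpl_indicators => //.
by rewrite eq_sym.
Qed.

Lemma prim_defect_at_xx M n p :
  prim_defect M p ((n, 0%N), (n, 0%N)) =
  (p == (n, 0%N))%:R * (1 - (n == M)%:R - (n == 0)%:R).
Proof.
case: p => n' m'; rewrite /prim_defect coefHH_Delta_basis !xpair_eqE /= ?andbF ?andbT.
case: (eqVneq n' n) => [->|/negbTE ne]; rewrite ?eqxx /=; last first.
  by rewrite ?ne ?(eq_sym n n') ?ne; simpl_indicators.
case: m' => [|[|m']]; simpl_indicators => //.
by rewrite [M == _]eq_sym [0 == _]eq_sym opprD addrA.
Qed.

Lemma prim_defect_at_1x M p : M != 0 ->
  prim_defect M p ((0, 0%N), (M, 0%N)) = (p == (0, 0%N))%:R * -1 + (p == (M, 0%N))%:R * -1.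
Proof.
move=> M0; case: p => n' m'; rewrite /prim_defect coefHH_Delta_basis !xpair_eqE /= ?andbF ?andbT.
case: m' => [|m']; simpl_indicators => //.
case: (eqVneq n' 0) => [->|n'0]; first by rewrite [0 == M]eq_sym (negbTE M0) /=; ring.
by case: (n' == M); rewrite /=; ring.
Qed.

Lemma prim_defect_y_eq0 pp : prim_defect 1 (0, 1%N) pp = 0.
Proof.
case: pp => [[a j] [a2 l]]; rewrite /prim_defect coefHH_Delta_basis !xpair_eqE.
case: j => [|[|j]]; case: l => [|[|l]] /=; rewrite ?andbF ?andFb /=.
all: rewrite ?[_ == a]eq_sym ?[_ == a2]eq_sym ?addr0 ?add0r ?andbT /=.
all: try by rewrite !mul0r subrr.
all: by rewrite ?qbinomn0 ?qbinomnn ?mulr0 ?addr0 !mulr1 subrr.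
Qed.

Lemma prim_defect_grouplike M pp : prim_defect M (M, 0%N) pp = prim_defect M (0, 0%N) pp.
Proof.
case: pp => [[a j] [a2 l]]; rewrite /prim_defect !coefHH_Delta_basis !xpair_eqE.
case: j => [|j]; case: l => [|l] /=; rewrite ?andbF ?andFb //=.
rewrite ?[_ == a]eq_sym ?[_ == a2]eq_sym ?addr0 ?andbT /=.
by rewrite qbinomn0 !mulr1; ring.
Qed.

Lemma skew_prim_eqH M (c c' : Hel k) : eqH c c' ->
  skew_prim q (Hxz k M) (H1 k) c' -> skew_prim q (Hxz k M) (H1 k) c.
Proof.
move=> eq_cc' /skew_primE prim_c'; apply/skew_primE => pp.
by rewrite (eqH_big (prim_defect M ^~ pp) eq_cc') prim_c'.
Qed.

Lemma skew_prim_add M (u v : Hel k) :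
  skew_prim q (Hxz k M) (H1 k) u -> skew_prim q (Hxz k M) (H1 k) v ->
  skew_prim q (Hxz k M) (H1 k) (Hadd u v).
Proof.
move=> /skew_primE prim_u /skew_primE prim_v; apply/skew_primE => pp.
by rewrite big_cat /= prim_u prim_v addr0.
Qed.

Lemma skew_prim_scale M a (u : Hel k) :
  skew_prim q (Hxz k M) (H1 k) u -> skew_prim q (Hxz k M) (H1 k) (Hscale a u).
Proof.
move=> /skew_primE prim_u; apply/skew_primE => pp.
rewrite big_map (eq_bigr (fun t => a * (t.1 * prim_defect M t.2 pp))) => [|t _].
  by rewrite -mulr_sumr prim_u mulr0.
by rewrite /= mulrA.
Qed.

Lemma skew_prim_y : skew_prim q (Hxz k 1) (H1 k) (Hy k).
Proof. by apply/(skew_primE 1) => pp; rewrite big_seq1 prim_defect_y_eq0 mulr0. Qed.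

Lemma skew_prim_grouplike_sub1 M : skew_prim q (Hxz k M) (H1 k) (Hsub (Hxz k M) (H1 k)).
Proof.
apply/skew_primE => pp; rewrite big_cons big_seq1 /= prim_defect_grouplike; ring.
Qed.

Lemma coefH_cat (u v : Hel k) p : coefH (u ++ v) p = coefH u p + coefH v p.
Proof. by rewrite /coefH big_cat. Qed.

Lemma coefH_scale a (u : Hel k) p : coefH (Hscale a u) p = a * coefH u p.
Proof. by rewrite /coefH big_map mulr_sumr; apply: eq_bigr. Qed.

Lemma coefH_basis n m p : coefH (Hbasis k n m) p = ((n, m) == p)%:R.
Proof. by rewrite /coefH big_mkcond big_seq1 /=; case: eqP. Qed.

Section SkewPrimitiveCoefficients.
Hypothesis q_not_root1 : forall n, (0 < n)%N -> q ^+ n != 1.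
Variables (M : int) (c : Hel k).
Hypothesis prim_c : skew_prim q (Hxz k M) (H1 k) c.

Let prim_defect_c := iffLR (skew_primE M c) prim_c.

Lemma qbinom_n1_neq0 m : qbinom m.+1 1 != 0.
Proof.
apply/eqP => qbinom0; have := qbinomn1 m.+1; rewrite qbinom0 mulr0 => /esym/eqP.
by rewrite subr_eq0 eq_sym; apply/negP/q_not_root1.
Qed.

Lemma coefH_skew_prim_y_ge2 n m : coefH c (n, m.+2) = 0.
Proof.
have /eqP := prim_defect_c ((n, 1%N), (n + 1, m.+1)).
rewrite (big_coefH1 _ (prim_defect_at_yy M n m)) mulf_eq0.
by rewrite (negbTE (qbinom_n1_neq0 _)) orbF => /eqP.
Qed.

Lemma coefH_skew_prim_xny n : n != 0 -> coefH c (n, 1%N) = 0.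
Proof.
move=> n0; have := prim_defect_c ((n, 0%N), (n, 1%N)).
by rewrite (big_coefH1 _ (prim_defect_at_xy M n)) (negbTE n0) subr0 mulr1.
Qed.

Lemma coefH_skew_prim_y1 : M != 1 -> coefH c (0, 1%N) = 0.
Proof.
move=> M1; have := prim_defect_c ((0, 1%N), (0 + 1, 0%N)).
by rewrite (big_coefH1 _ (prim_defect_at_yx M 0)) add0r eq_sym (negbTE M1) subr0 mulr1.
Qed.

Lemma coefH_skew_prim_xn n : (n == M) = (n == 0) -> coefH c (n, 0%N) = 0.
Proof.
move=> nM; have := prim_defect_c ((n, 0%N), (n, 0%N)).
rewrite (big_coefH1 _ (prim_defect_at_xx M n)) nM.
case: (n == 0); last by rewrite !subr0 mulr1.
by rewrite subrr sub0r mulrN1 => /eqP; rewrite oppr_eq0 => /eqP.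
Qed.

Lemma coefH_skew_prim_1 : M != 0 -> coefH c (0, 0%N) = - coefH c (M, 0%N).
Proof.
move=> M0; have := prim_defect_c ((0, 0%N), (M, 0%N)).
rewrite (big_coefH2 _ _ (fun p => prim_defect_at_1x p M0)); last first.
  by rewrite xpair_eqE eq_sym (negbTE M0).
by move/eqP; rewrite -mulrDl mulrN1 oppr_eq0 addr_eq0 => /eqP.
Qed.

Lemma coefH_skew_prim p :
  coefH c p = coefH c (0, 1%N) * ((0, 1%N) == p)%:R +
              coefH c (M, 0%N) * (((M, 0%N) == p)%:R - ((0, 0%N) == p)%:R).
Proof.
case: p => n [|[|m]]; rewrite !xpair_eqE /= ?andbT ?andbF ?subrr ?mulr0 ?add0r ?addr0.
- have [-> | n0] := eqVneq n 0.
    have [M0 | M0] := eqVneq M 0; last by rewrite coefH_skew_prim_1 // sub0r mulrN1.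
    by rewrite subrr mulr0 coefH_skew_prim_xn // M0.
  have [-> | nM] := eqVneq n M; first by rewrite subr0 mulr1.
  by rewrite coefH_skew_prim_xn ?(negbTE n0) ?(negbTE nM) // subrr mulr0.
- have [-> | n0] := eqVneq n 0; first by rewrite mulr1.
  by rewrite coefH_skew_prim_xny // mulr0.
- exact: coefH_skew_prim_y_ge2.
Qed.
End SkewPrimitiveCoefficients.

Lemma coefH_y_grouplike_sub1 a b M p :
  coefH (Hadd (Hscale a (Hy k)) (Hscale b (Hsub (Hxz k M) (H1 k)))) p =
  a * ((0, 1%N) == p)%:R + b * (((M, 0%N) == p)%:R - ((0, 0%N) == p)%:R).
Proof. by rewrite /Hadd /Hsub !(coefH_cat, coefH_scale, coefH_basis); ring. Qed.

Lemma coefH_grouplike_sub1 b M p :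
  coefH (Hscale b (Hsub (Hxz k M) (H1 k))) p =
  b * (((M, 0%N) == p)%:R - ((0, 0%N) == p)%:R).
Proof. by rewrite /Hsub !(coefH_cat, coefH_scale, coefH_basis); ring. Qed.

End QPlane.

Theorem lemma2p6 (k : fieldType) (q : k) (hq0 : q != 0)
    (hq : forall n : nat, (0 < n)%N -> q ^+ n != 1) :
  (forall c : Hel k, skew_prim q (Hx k) (H1 k) c <->
     exists a b : k, eqH c (Hadd (Hscale a (Hy k)) (Hscale b (Hsub (Hx k) (H1 k)))))
  /\
  (forall m : int, m != 1 -> forall c : Hel k,
     skew_prim q (Hxz k m) (H1 k) c <->
     exists a : k, eqH c (Hscale a (Hsub (Hxz k m) (H1 k)))).
Proof.
split=> [c | M M1 c].
- rewrite -[Hx k]/(Hxz k 1); split=> [prim_c | [a [b eq_c]]].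
    exists (coefH c (0, 1%N)), (coefH c (1, 0%N)) => p.
    by rewrite coefH_y_grouplike_sub1 (coefH_skew_prim hq prim_c).
  apply: (skew_prim_eqH eq_c); apply: skew_prim_add; apply: skew_prim_scale.
    exact: skew_prim_y.
  exact: skew_prim_grouplike_sub1.
- split=> [prim_c | [a eq_c]].
    exists (coefH c (M, 0%N)) => p.
    rewrite coefH_grouplike_sub1 (coefH_skew_prim hq prim_c).
    by rewrite (coefH_skew_prim_y1 prim_c) // mul0r add0r.
  by apply: (skew_prim_eqH eq_c); apply: skew_prim_scale; apply: skew_prim_grouplike_sub1.
Qed.
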